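(* Let $$f(t)=\frac{2431}{80}t^9-\frac{1287}{20}t^7+\frac{18333}{400}t^5+\frac{343}{40}t^4-\frac{83}{10}t^3-\frac{213}{100}t^2+\frac{t}{10}-\frac{1}{200}.$$ For any finite set $X=\{x_1,\dots,x_n\}\subset\mathbf{S}^2$, with $\phi_{i,j}$ the angular distance between $x_i$ and $x_j$, $$S(X):=\sum_{i=1}^n\sum_{j=1}^n f(\cos\phi_{i,j})\ \ge\ n^2.$$
   Context: $\mathbf{S}^2$ is the unit sphere in $\mathbb{R}^3$; the angular (spherical) distance between unit vectors $x,y$ is $\arccos\langle x,y\rangle$. *)

From Stdlib Require Import Reals List.
Open Scope R_scope.

Definition vec3 : Type := (R * R * R)%type.

Definition inner (x y : vec3) : R :=
  let '(x1, x2, x3) := x in let '(y1, y2, y3) := y in x1*y1 + x2*y2 + x3*y3.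

Definition on_S2 (x : vec3) : Prop := inner x x = 1.

Definition angdist (x y : vec3) : R := acos (inner x y).

Definition f (t : R) : R :=
  2431/80 * t^9 - 1287/20 * t^7 + 18333/400 * t^5 + 343/40 * t^4
  - 83/10 * t^3 - 213/100 * t^2 + t/10 - 1/200.

Definition S (X : list vec3) : R :=
  fold_right Rplus 0
    (map (fun xi => fold_right Rplus 0
            (map (fun xj => f (cos (angdist xi xj))) X)) X).

(* Delsarte's method.  On the sphere, f(<x,y>) = 1 + sum_k a_k P_k(<x,y>) with
   a_k >= 0 and P_k the Legendre polynomials (k = 1,2,3,4,5,9).  By the addition
   theorem each P_k(<x,y>) is a nonnegative combination of products Y(x) Y(y) of
   spherical harmonics of degree k, so S(X) = n^2 + sum_k a_k sum_Y w_Y (sum_i Y(x_i))^2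
   >= n^2. *)
From Stdlib Require Import Reals List Lra Psatz.
Import ListNotations.
Open Scope R_scope.

Section PositiveKernels.

Context {T : Type}.

Definition rsum {A : Type} (h : A -> R) (l : list A) : R := fold_right Rplus 0 (map h l).

Lemma rsum_ext {A : Type} (h1 h2 : A -> R) (l : list A) :
  (forall a, In a l -> h1 a = h2 a) -> rsum h1 l = rsum h2 l.
Proof.
  induction l as [|a l IH]; intros H; [reflexivity|].
  unfold rsum in *; simpl.
  rewrite H by (left; reflexivity).
  rewrite IH; [reflexivity|].
  intros b Hb; apply H; right; exact Hb.
Qed.

Lemma rsum_plus {A : Type} (h1 h2 : A -> R) (l : list A) :
  rsum (fun a => h1 a + h2 a) l = rsum h1 l + rsum h2 l.
Proof. induction l; unfold rsum in *; simpl; [ring | rewrite IHl; ring]. Qed.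

Lemma rsum_scal {A : Type} (c : R) (h : A -> R) (l : list A) :
  rsum (fun a => c * h a) l = c * rsum h l.
Proof. induction l; unfold rsum in *; simpl; [ring | rewrite IHl; ring]. Qed.

Lemma rsum_const {A : Type} (c : R) (l : list A) : rsum (fun _ => c) l = INR (length l) * c.
Proof.
  induction l; unfold rsum in *; simpl; [ring|].
  rewrite IHl; destruct (length l); simpl; ring.
Qed.

Lemma rsum_nonneg {A : Type} (h : A -> R) (l : list A) :
  (forall a, In a l -> 0 <= h a) -> 0 <= rsum h l.
Proof.
  induction l as [|a l IH]; intros H; unfold rsum in *; simpl; [lra|].
  assert (0 <= h a) by (apply H; left; reflexivity).
  assert (0 <= fold_right Rplus 0 (map h l)) by (apply IH; intros b Hb; apply H; right; exact Hb).
  lra.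
Qed.

Definition dsum (K : T -> T -> R) (X : list T) : R := rsum (fun x => rsum (K x) X) X.

Definition positive_kernel (K : T -> T -> R) : Prop := forall X, 0 <= dsum K X.

Lemma dsum_plus (K L : T -> T -> R) (X : list T) :
  dsum (fun x y => K x y + L x y) X = dsum K X + dsum L X.
Proof.
  unfold dsum; rewrite <- rsum_plus.
  apply rsum_ext; intros x _; apply rsum_plus.
Qed.

Lemma dsum_scal (c : R) (K : T -> T -> R) (X : list T) :
  dsum (fun x y => c * K x y) X = c * dsum K X.
Proof.
  unfold dsum; rewrite <- rsum_scal.
  apply rsum_ext; intros x _; apply rsum_scal.
Qed.

Lemma positive_kernel_plus (K L : T -> T -> R) :
  positive_kernel K -> positive_kernel L -> positive_kernel (fun x y => K x y + L x y).
Proof.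
  intros HK HL X; rewrite dsum_plus.
  specialize (HK X); specialize (HL X); lra.
Qed.

Lemma positive_kernel_scal (c : R) (K : T -> T -> R) :
  0 <= c -> positive_kernel K -> positive_kernel (fun x y => c * K x y).
Proof.
  intros Hc HK X; rewrite dsum_scal.
  apply Rmult_le_pos; [exact Hc | apply HK].
Qed.

Definition gram (B : list (R * (T -> R))) (x y : T) : R :=
  rsum (fun p => fst p * snd p x * snd p y) B.

Lemma dsum_gram (B : list (R * (T -> R))) (X : list T) :
  dsum (gram B) X = rsum (fun p => fst p * rsum (snd p) X ^ 2) B.
Proof.
  induction B as [|p B IH].
  - change (rsum (fun x => rsum (fun _ => 0) X) X = 0).
    rewrite (rsum_ext _ (fun _ => 0)), rsum_const; [ring|].
    intros x _; rewrite rsum_const; ring.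
  - change (dsum (fun x y => fst p * snd p x * snd p y + gram B x y) X
            = fst p * rsum (snd p) X ^ 2 + rsum (fun p => fst p * rsum (snd p) X ^ 2) B).
    rewrite dsum_plus, IH.
    f_equal.
    unfold dsum.
    rewrite (rsum_ext _ (fun x => (fst p * snd p x) * rsum (snd p) X)).
    + rewrite (rsum_ext _ (fun x => (fst p * rsum (snd p) X) * snd p x)) by (intros; ring).
      rewrite rsum_scal; ring.
    + intros x _; apply rsum_scal.
Qed.

Lemma positive_kernel_gram (B : list (R * (T -> R))) :
  Forall (fun p => 0 <= fst p) B -> positive_kernel (gram B).
Proof.
  intros HB X; rewrite dsum_gram.
  apply rsum_nonneg; intros p Hp.
  apply Rmult_le_pos; [exact (proj1 (Forall_forall _ B) HB p Hp) | apply pow2_ge_0].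
Qed.

End PositiveKernels.

(* Legendre polynomials P_k(t), homogenized with n standing for |x|^2 |y|^2, so that
   the addition formulas below are polynomial identities on all of R^3. *)
Definition legendre1 (t n : R) : R := t.
Definition legendre2 (t n : R) : R := (3*t^2 - n) / 2.
Definition legendre3 (t n : R) : R := (5*t^3 - 3*t*n) / 2.
Definition legendre4 (t n : R) : R := (35*t^4 - 30*t^2*n + 3*n^2) / 8.
Definition legendre5 (t n : R) : R := (63*t^5 - 70*t^3*n + 15*t*n^2) / 8.
Definition legendre9 (t n : R) : R :=
  (12155*t^9 - 25740*t^7*n + 18018*t^5*n^2 - 4620*t^3*n^3 + 315*t*n^4) / 128.

Lemma f_legendre_expansion (t : R) :
  f t = 1 + 8/5 * legendre1 t 1 + 87/25 * legendre2 t 1 + 33/20 * legendre3 t 1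
          + 49/25 * legendre4 t 1 + 1/10 * legendre5 t 1 + 8/25 * legendre9 t 1.
Proof.
  unfold f, legendre1, legendre2, legendre3, legendre4, legendre5, legendre9; field.
Qed.

(* Weighted orthogonal bases of the harmonic polynomials of degree k on R^3; their
   Gram kernels are the zonal kernels, i.e. the addition theorem for P_k. *)
Definition harmonics1 : list (R * (vec3 -> R)) :=
  [(1, fun '(a, b, c) => a); (1, fun '(a, b, c) => b); (1, fun '(a, b, c) => c)].

Definition harmonics2 : list (R * (vec3 -> R)) :=
  [(1, fun '(a, b, c) => 2*a^2 - b^2 - c^2);
   (12, fun '(a, b, c) => a*b);
   (12, fun '(a, b, c) => a*c);
   (3, fun '(a, b, c) => b^2 - c^2);
   (12, fun '(a, b, c) => b*c)].

Definition harmonics3 : list (R * (vec3 -> R)) :=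
  [(2, fun '(a, b, c) => 2*a^3 - 3*a*b^2 - 3*a*c^2);
   (3, fun '(a, b, c) => 4*a^2*b - b^3 - b*c^2);
   (3, fun '(a, b, c) => 4*a^2*c - b^2*c - c^3);
   (30, fun '(a, b, c) => a*b^2 - a*c^2);
   (120, fun '(a, b, c) => a*b*c);
   (5, fun '(a, b, c) => b^3 - 3*b*c^2);
   (5, fun '(a, b, c) => 3*b^2*c - c^3)].

Definition harmonics4 : list (R * (vec3 -> R)) :=
  [(1, fun '(a, b, c) => 8*a^4 - 24*a^2*b^2 - 24*a^2*c^2 + 3*b^4 + 6*b^2*c^2 + 3*c^4);
   (40, fun '(a, b, c) => 4*a^3*b - 3*a*b^3 - 3*a*b*c^2);
   (40, fun '(a, b, c) => 4*a^3*c - 3*a*b^2*c - 3*a*c^3);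
   (20, fun '(a, b, c) => 6*a^2*b^2 - 6*a^2*c^2 - b^4 + c^4);
   (80, fun '(a, b, c) => 6*a^2*b*c - b^3*c - b*c^3);
   (280, fun '(a, b, c) => a*b^3 - 3*a*b*c^2);
   (280, fun '(a, b, c) => 3*a*b^2*c - a*c^3);
   (35, fun '(a, b, c) => b^4 - 6*b^2*c^2 + c^4);
   (560, fun '(a, b, c) => b^3*c - b*c^3)].

Definition harmonics5 : list (R * (vec3 -> R)) :=
  [(2, fun '(a, b, c) => 8*a^5 - 40*a^3*b^2 - 40*a^3*c^2 + 15*a*b^4 + 30*a*b^2*c^2 + 15*a*c^4);
   (30, fun '(a, b, c) => 8*a^4*b - 12*a^2*b^3 - 12*a^2*b*c^2 + b^5 + 2*b^3*c^2 + b*c^4);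
   (30, fun '(a, b, c) => 8*a^4*c - 12*a^2*b^2*c - 12*a^2*c^3 + b^4*c + 2*b^2*c^3 + c^5);
   (840, fun '(a, b, c) => 2*a^3*b^2 - 2*a^3*c^2 - a*b^4 + a*c^4);
   (3360, fun '(a, b, c) => 2*a^3*b*c - a*b^3*c - a*b*c^3);
   (35, fun '(a, b, c) => 8*a^2*b^3 - 24*a^2*b*c^2 - b^5 + 2*b^3*c^2 + 3*b*c^4);
   (35, fun '(a, b, c) => 24*a^2*b^2*c - 8*a^2*c^3 - 3*b^4*c - 2*b^2*c^3 + c^5);
   (630, fun '(a, b, c) => a*b^4 - 6*a*b^2*c^2 + a*c^4);
   (10080, fun '(a, b, c) => a*b^3*c - a*b*c^3);
   (63, fun '(a, b, c) => b^5 - 10*b^3*c^2 + 5*b*c^4);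
   (63, fun '(a, b, c) => 5*b^4*c - 10*b^2*c^3 + c^5)].

Definition harmonics9 : list (R * (vec3 -> R)) :=
  [(2, fun '(a, b, c) => 128*a^9 - 2304*a^7*b^2 - 2304*a^7*c^2 + 6048*a^5*b^4
        + 12096*a^5*b^2*c^2 + 6048*a^5*c^4 - 3360*a^3*b^6 - 10080*a^3*b^4*c^2
        - 10080*a^3*b^2*c^4 - 3360*a^3*c^6 + 315*a*b^8 + 1260*a*b^6*c^2
        + 1890*a*b^4*c^4 + 1260*a*b^2*c^6 + 315*a*c^8);
   (90, fun '(a, b, c) => 128*a^8*b - 896*a^6*b^3 - 896*a^6*b*c^2 + 1120*a^4*b^5
        + 2240*a^4*b^3*c^2 + 1120*a^4*b*c^4 - 280*a^2*b^7 - 840*a^2*b^5*c^2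
        - 840*a^2*b^3*c^4 - 280*a^2*b*c^6 + 7*b^9 + 28*b^7*c^2 + 42*b^5*c^4
        + 28*b^3*c^6 + 7*b*c^8);
   (90, fun '(a, b, c) => 128*a^8*c - 896*a^6*b^2*c - 896*a^6*c^3 + 1120*a^4*b^4*c
        + 2240*a^4*b^2*c^3 + 1120*a^4*c^5 - 280*a^2*b^6*c - 840*a^2*b^4*c^3
        - 840*a^2*b^2*c^5 - 280*a^2*c^7 + 7*b^8*c + 28*b^6*c^3 + 42*b^4*c^5
        + 28*b^2*c^7 + 7*c^9);
   (7920, fun '(a, b, c) => 32*a^7*b^2 - 32*a^7*c^2 - 112*a^5*b^4 + 112*a^5*c^4
        + 70*a^3*b^6 + 70*a^3*b^4*c^2 - 70*a^3*b^2*c^4 - 70*a^3*c^6 - 7*a*b^8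
        - 14*a*b^6*c^2 + 14*a*b^2*c^6 + 7*a*c^8);
   (31680, fun '(a, b, c) => 32*a^7*b*c - 112*a^5*b^3*c - 112*a^5*b*c^3 + 70*a^3*b^5*c
        + 140*a^3*b^3*c^3 + 70*a^3*b*c^5 - 7*a*b^7*c - 21*a*b^5*c^3 - 21*a*b^3*c^5
        - 7*a*b*c^7);
   (4620, fun '(a, b, c) => 64*a^6*b^3 - 192*a^6*b*c^2 - 120*a^4*b^5 + 240*a^4*b^3*c^2
        + 360*a^4*b*c^4 + 36*a^2*b^7 - 36*a^2*b^5*c^2 - 180*a^2*b^3*c^4
        - 108*a^2*b*c^6 - b^9 + 6*b^5*c^4 + 8*b^3*c^6 + 3*b*c^8);
   (4620, fun '(a, b, c) => 192*a^6*b^2*c - 64*a^6*c^3 - 360*a^4*b^4*c - 240*a^4*b^2*c^3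
        + 120*a^4*c^5 + 108*a^2*b^6*c + 180*a^2*b^4*c^3 + 36*a^2*b^2*c^5
        - 36*a^2*c^7 - 3*b^8*c - 8*b^6*c^3 - 6*b^4*c^5 + c^9);
   (360360, fun '(a, b, c) => 8*a^5*b^4 - 48*a^5*b^2*c^2 + 8*a^5*c^4 - 8*a^3*b^6
        + 40*a^3*b^4*c^2 + 40*a^3*b^2*c^4 - 8*a^3*c^6 + a*b^8 - 4*a*b^6*c^2
        - 10*a*b^4*c^4 - 4*a*b^2*c^6 + a*c^8);
   (5765760, fun '(a, b, c) => 8*a^5*b^3*c - 8*a^5*b*c^3 - 8*a^3*b^5*c + 8*a^3*b*c^5
        + a*b^7*c + a*b^5*c^3 - a*b^3*c^5 - a*b*c^7);
   (5148, fun '(a, b, c) => 56*a^4*b^5 - 560*a^4*b^3*c^2 + 280*a^4*b*c^4 - 28*a^2*b^7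
        + 252*a^2*b^5*c^2 + 140*a^2*b^3*c^4 - 140*a^2*b*c^6 + b^9 - 8*b^7*c^2
        - 14*b^5*c^4 + 5*b*c^8);
   (5148, fun '(a, b, c) => 280*a^4*b^4*c - 560*a^4*b^2*c^3 + 56*a^4*c^5 - 140*a^2*b^6*c
        + 140*a^2*b^4*c^3 + 252*a^2*b^2*c^5 - 28*a^2*c^7 + 5*b^8*c - 14*b^4*c^5
        - 8*b^2*c^7 + c^9);
   (34320, fun '(a, b, c) => 14*a^3*b^6 - 210*a^3*b^4*c^2 + 210*a^3*b^2*c^4 - 14*a^3*c^6
        - 3*a*b^8 + 42*a*b^6*c^2 - 42*a*b^2*c^6 + 3*a*c^8);
   (137280, fun '(a, b, c) => 42*a^3*b^5*c - 140*a^3*b^3*c^3 + 42*a^3*b*c^5 - 9*a*b^7*c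
        + 21*a*b^5*c^3 + 21*a*b^3*c^5 - 9*a*b*c^7);
   (6435, fun '(a, b, c) => 16*a^2*b^7 - 336*a^2*b^5*c^2 + 560*a^2*b^3*c^4
        - 112*a^2*b*c^6 - b^9 + 20*b^7*c^2 - 14*b^5*c^4 - 28*b^3*c^6 + 7*b*c^8);
   (6435, fun '(a, b, c) => 112*a^2*b^6*c - 560*a^2*b^4*c^3 + 336*a^2*b^2*c^5
        - 16*a^2*c^7 - 7*b^8*c + 28*b^6*c^3 + 14*b^4*c^5 - 20*b^2*c^7 + c^9);
   (218790, fun '(a, b, c) => a*b^8 - 28*a*b^6*c^2 + 70*a*b^4*c^4 - 28*a*b^2*c^6 + a*c^8);
   (14002560, fun '(a, b, c) => a*b^7*c - 7*a*b^5*c^3 + 7*a*b^3*c^5 - a*b*c^7);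
   (12155, fun '(a, b, c) => b^9 - 36*b^7*c^2 + 126*b^5*c^4 - 84*b^3*c^6 + 9*b*c^8);
   (12155, fun '(a, b, c) => 9*b^8*c - 84*b^6*c^3 + 126*b^4*c^5 - 36*b^2*c^7 + c^9)].

Ltac solve_addition_formula :=
  intros [[a b] c] [[d e] f'];
  unfold gram, rsum, inner; simpl;
  unfold legendre1, legendre2, legendre3, legendre4, legendre5, legendre9; field.

Lemma gram_harmonics1 (x y : vec3) :
  gram harmonics1 x y = legendre1 (inner x y) (inner x x * inner y y).
Proof. revert x y; solve_addition_formula. Qed.

Lemma gram_harmonics2 (x y : vec3) :
  gram harmonics2 x y = 4 * legendre2 (inner x y) (inner x x * inner y y).
Proof. revert x y; solve_addition_formula. Qed.

Lemma gram_harmonics3 (x y : vec3) :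
  gram harmonics3 x y = 8 * legendre3 (inner x y) (inner x x * inner y y).
Proof. revert x y; solve_addition_formula. Qed.

Lemma gram_harmonics4 (x y : vec3) :
  gram harmonics4 x y = 64 * legendre4 (inner x y) (inner x x * inner y y).
Proof. revert x y; solve_addition_formula. Qed.

Lemma gram_harmonics5 (x y : vec3) :
  gram harmonics5 x y = 128 * legendre5 (inner x y) (inner x x * inner y y).
Proof. revert x y; solve_addition_formula. Qed.

Lemma gram_harmonics9 (x y : vec3) :
  gram harmonics9 x y = 32768 * legendre9 (inner x y) (inner x x * inner y y).
Proof. revert x y; solve_addition_formula. Qed.

(* The coefficients are those of [f_legendre_expansion] divided by the normalizing
   constants of the addition formulas. *)
Definition delsarte_kernel (x y : vec3) : R :=
  8/5 * gram harmonics1 x y + 87/25/4 * gram harmonics2 x y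
  + 33/20/8 * gram harmonics3 x y + 49/25/64 * gram harmonics4 x y
  + 1/10/128 * gram harmonics5 x y + 8/25/32768 * gram harmonics9 x y.

Lemma positive_kernel_delsarte : positive_kernel delsarte_kernel.
Proof.
  unfold delsarte_kernel.
  repeat apply positive_kernel_plus;
    apply positive_kernel_scal; try lra;
    apply positive_kernel_gram; repeat constructor; simpl; lra.
Qed.

Lemma f_inner_on_S2 (x y : vec3) :
  on_S2 x -> on_S2 y -> f (inner x y) = 1 + delsarte_kernel x y.
Proof.
  unfold on_S2; intros hx hy.
  unfold delsarte_kernel.
  rewrite gram_harmonics1, gram_harmonics2, gram_harmonics3, gram_harmonics4,
    gram_harmonics5, gram_harmonics9, hx, hy, Rmult_1_l, f_legendre_expansion.
  field.
Qed.

Lemma inner_bound_on_S2 (x y : vec3) : on_S2 x -> on_S2 y -> -1 <= inner x y <= 1.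
Proof.
  destruct x as [[a b] c], y as [[d e] f'].
  unfold on_S2, inner; simpl; intros hx hy.
  (* Lagrange's identity *)
  assert (Hlag : (a*d+b*e+c*f')^2 + (a*e-b*d)^2 + (a*f'-c*d)^2 + (b*f'-c*e)^2
                 = (a*a+b*b+c*c)*(d*d+e*e+f'*f')) by ring.
  rewrite hx, hy in Hlag.
  pose proof (pow2_ge_0 (a*e-b*d)); pose proof (pow2_ge_0 (a*f'-c*d));
    pose proof (pow2_ge_0 (b*f'-c*e)).
  split; nra.
Qed.

Lemma cos_angdist_on_S2 (x y : vec3) : on_S2 x -> on_S2 y -> cos (angdist x y) = inner x y.
Proof. intros hx hy; apply cos_acos, inner_bound_on_S2; assumption. Qed.

Theorem lemma2 (X : list vec3) :
  NoDup X -> (forall x, In x X -> on_S2 x) ->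
  S X >= INR (length X) ^ 2.
Proof.
  intros _ HX.
  assert (HS : S X = dsum (fun x y => 1 + delsarte_kernel x y) X).
  { apply rsum_ext; intros x Hx; apply rsum_ext; intros y Hy.
    rewrite cos_angdist_on_S2, f_inner_on_S2 by (apply HX; assumption).
    reflexivity. }
  assert (Hones : dsum (fun _ _ => 1) X = INR (length X) ^ 2).
  { unfold dsum; rewrite (rsum_ext _ (fun _ => INR (length X) * 1)), rsum_const.
    - ring.
    - intros; apply rsum_const. }
  rewrite HS, (dsum_plus (fun _ _ => 1)), Hones.
  pose proof (positive_kernel_delsarte X); lra.
Qed.
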